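(* Let $a,r$ be positive integers and let $a_n=a+(n-1)r$ for $n\ge 1$. Then the sequence $(\Gamma(a_n,a_{n+1}))_{n\ge 1}$ is either $1,2,1,2,\ldots$ or $2,1,2,1,\ldots$.
   Context: For relatively prime positive integers $p,q$, exactly one of the equations $px+qy=\frac{(p-1)(q-1)}{2}$ (Equation 1) and $px+qy+1=\frac{(p-1)(q-1)}{2}$ (Equation 2) has a solution in nonnegative integers $(x,y)$. For positive integers $a,b$ with $d=\gcd(a,b)$, $\Gamma(a,b)=1$ if Equation 1 with $(p,q)=(a/d,b/d)$ has a nonnegative integer solution, and $\Gamma(a,b)=2$ otherwise. *)

From mathcomp Require Import all_boot.
From Stdlib Require Import ClassicalEpsilon.
Set Implicit Arguments. Unset Strict Implicit. Unset Printing Implicit Defensive.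

(* Equation 1 for (p,q): p x + q y = (p-1)(q-1)/2 has a solution in
   nonnegative integers.  For coprime p,q, (p-1)(q-1) is even, so the
   nat division by 2 is exact. *)
Definition eq1_solvable (p q : nat) : Prop :=
  exists x y : nat, p * x + q * y = ((p - 1) * (q - 1)) %/ 2.

Definition Gamma (a b : nat) : nat :=
  let d := gcdn a b in
  if excluded_middle_informative (eq1_solvable (a %/ d) (b %/ d)) then 1 else 2.

Definition arith (a r n : nat) : nat := a + (n - 1) * r.

(* Write E(p, q) for the solvability of Equation 1.  For coprime p and q,
   Sylvester's duality (n is a nonnegative combination of p and q iff
   pq - p - q - n is not) shows that Equation 2 is solvable exactly when
   E(p, q) fails.  For odd p = 2k + 1, two explicit changes of variables give
   E(p, p + s) <-> E(p, s) and E(p, p - s) <-> (Equation 2 for (p, s)), i.e.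
   E(p, p - s) <-> ~ E(p, s).  After dividing a and r by their gcd, chaining
   these moves through whichever of P + s and P + 2s is odd yields
   E(P, P + s) <-> ~ E(P + s, P + 2s) for consecutive terms P, P + s, P + 2s of
   the progression, so Gamma alternates. *)

From mathcomp Require Import all_boot zify.
From Stdlib Require Import ClassicalEpsilon.

Set Implicit Arguments.
Unset Strict Implicit.
Unset Printing Implicit Defensive.

Definition nonneg_comb (p q n : nat) : Prop := exists x y : nat, p * x + q * y = n.

Definition eq2_solvable (p q : nat) : Prop :=
  exists x y : nat, p * x + q * y + 1 = ((p - 1) * (q - 1)) %/ 2.

Lemma no_positive_comb_eq_mul p q u v :
  coprime p q -> 0 < u -> 0 < v -> p * u + q * v != p * q.
Proof.
move=> co_pq u_gt0 v_gt0; apply/eqP => e.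
have p_dvd_v : p %| v.
  rewrite -(Gauss_dvdr _ co_pq); apply/dvdnP; exists (q - u).
  rewrite mulnBl; lia.
have p_le_v : p <= v by exact: dvdn_leq.
nia.
Qed.

Lemma exists_mul_eq_mod p q n : 0 < p -> 0 < q -> coprime p q ->
  exists2 y, y < p & q * y = n %[mod p].
Proof.
move=> p_gt0 q_gt0 co_pq.
case: (egcdnP p q_gt0) => kq kp def_kq _.
rewrite gcdnC (eqP co_pq) in def_kq.
exists ((kq * n) %% p); first by rewrite ltn_mod.
rewrite modnMmr mulnA [q * kq]mulnC def_kq.
by rewrite mulnDl mul1n mulnAC modnMDl.
Qed.

Lemma sylvester_duality p q n : 0 < p -> 0 < q -> coprime p q ->
  nonneg_comb p q n <-> ~ exists x y, p * x + q * y + n + p + q = p * q.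
Proof.
move=> p_gt0 q_gt0 co_pq; split.
  move=> [x [y def_n]] [x' [y' e]].
  have /eqP[] := no_positive_comb_eq_mul co_pq (ltn0Sn (x + x')) (ltn0Sn (y + y')).
  by rewrite !mulnS !mulnDr; lia.
move=> no_dual; have [y y_lt_p qy_n] := exists_mul_eq_mod n p_gt0 q_gt0 co_pq.
have [qy_le_n | n_lt_qy] := leqP (q * y) n.
  move/eqP: qy_n; rewrite eq_sym eqn_mod_dvd // => /dvdnP [x def_x].
  by exists x, y; lia.
move/eqP: qy_n; rewrite eqn_mod_dvd ?(ltnW n_lt_qy) // => /dvdnP [[|z] def_z]; first lia.
case: no_dual; exists z, (p.-1 - y).
have qp : q * p.-1 + q = q * p by rewrite -mulnSr prednK.
have qy_le : q * y <= q * p.-1 by rewrite leq_pmul2l // -ltnS prednK.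
rewrite mulSn [z * p]mulnC in def_z; rewrite mulnBr [p * q]mulnC; lia.
Qed.

Lemma coprime_odd p q : coprime p q -> odd p || odd q.
Proof.
by move=> co_pq; apply/contraT; rewrite negb_or -!dvdn2 -dvdn_gcd (eqP co_pq).
Qed.

Lemma eq1_solvable_eq2N p q : 0 < p -> 0 < q -> coprime p q ->
  eq1_solvable p q <-> ~ eq2_solvable p q.
Proof.
move=> p_gt0 q_gt0 co_pq; rewrite /eq2_solvable.
set N := (p - 1) * (q - 1) %/ 2.
have N2 : N * 2 = (p - 1) * (q - 1).
  rewrite divnK // dvdn2 oddM !oddB //= !addbT.
  by case/orP: (coprime_odd co_pq) => ->; rewrite ?andbF.
have pq1 : (p - 1) * (q - 1) + p + q = p * q + 1.
  by rewrite mulnBl mulnBr !mul1n muln1; nia.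
rewrite [eq1_solvable _ _](sylvester_duality N p_gt0 q_gt0 co_pq).
by split=> no_sol [x [y e]]; apply: no_sol; exists x, y; lia.
Qed.

Lemma eq1_solvableC p q : eq1_solvable p q <-> eq1_solvable q p.
Proof.
by rewrite /eq1_solvable mulnC; split=> [[x [y e]]|[x [y e]]]; exists y, x; lia.
Qed.

Lemma mul_subn1_half p q : odd p -> (p - 1) * (q - 1) %/ 2 = p./2 * (q - 1).
Proof.
move=> odd_p; have := odd_double_half p; rewrite odd_p => def_p.
by rewrite -{1}def_p addKn -muln2 mulnAC mulnK.
Qed.

Lemma odd_half_double p : odd p -> p = p./2.*2.+1.
Proof. by move=> odd_p; rewrite -{1}(odd_double_half p) odd_p. Qed.

Lemma eq1_solvableDl p s : odd p -> 0 < s ->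
  eq1_solvable p (p + s) <-> eq1_solvable p s.
Proof.
move=> odd_p s_gt0; rewrite /eq1_solvable !mul_subn1_half //.
move: p./2 (odd_half_double odd_p) => k -> {odd_p}.
split=> [[x [y e]] | [x [y e]]].
- have k_le_xy : k <= x + y by nia.
  by exists (x + y - k), y; nia.
- have y_le_k : y <= k by nia.
  by exists (x + k - y), y; nia.
Qed.

(* (c, c') = (0, 1) and (1, 0) give the two directions of [eq1_solvableBl]. *)
Lemma comb_reflect p k a b c c' x y : p = k.*2.+1 -> a + b = p -> 0 < a -> 0 < b ->
  c + c' = 1 -> p * x + a * y + c = k * (a - 1) ->
  exists t, p * t + b * y + c' = k * (b - 1).
Proof.
move=> def_p ab a_gt0 b_gt0 cc e.
have xy_lt_k : x + y < k by nia.
exists (k - (x + y).+1); set t := k - _.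
have def_k : k = (t + x + y).+1 by rewrite /t; lia.
have pk : p * k = p * t + p * x + p * y + p by rewrite {1}def_k mulnS !mulnDr; lia.
have py : p * y = a * y + b * y by rewrite -ab mulnDl.
have kp : k * p = k * a + k * b by rewrite -ab mulnDr.
have ka : k <= k * a by rewrite leq_pmulr.
have kb : k <= k * b by rewrite leq_pmulr.
rewrite !mulnBr !muln1 in e *; lia.
Qed.

Lemma eq1_solvableBl p s : odd p -> 0 < s < p ->
  eq1_solvable p (p - s) <-> eq2_solvable p s.
Proof.
move=> odd_p /andP[s_gt0 s_lt_p].
rewrite /eq1_solvable /eq2_solvable !mul_subn1_half //.
move: p./2 (odd_half_double odd_p) => k def_p.
have q_gt0 : 0 < p - s by rewrite subn_gt0.
move: (p - s) (subnKC (ltnW s_lt_p)) q_gt0 => q sq q_gt0.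
split=> [[x [y e]] | [x [y e]]].
- have [t e'] := comb_reflect def_p (etrans (addnC q s) sq) q_gt0 s_gt0
    (erefl : 0 + 1 = 1) (etrans (addn0 _) e).
  by exists t, y.
- have [t e'] := comb_reflect def_p sq s_gt0 q_gt0 (erefl : 1 + 0 = 1) e.
  by exists t, y; rewrite -e' addn0.
Qed.

Lemma eq1_solvableBlN p s : odd p -> coprime p s -> 0 < s < p ->
  eq1_solvable p (p - s) <-> ~ eq1_solvable p s.
Proof.
move=> odd_p co_ps /andP[s_gt0 s_lt_p].
have p_gt0 : 0 < p by rewrite (ltn_trans s_gt0).
rewrite eq1_solvableBl ?s_gt0 // eq1_solvable_eq2N //.
by have := classic (eq2_solvable p s); tauto.
Qed.

Lemma coprimeDl p s : coprime p s -> coprime (p + s) s.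
Proof. by move=> co_ps; rewrite /coprime gcdnC gcdnDr gcdnC. Qed.

Lemma eq1_solvable_step p s : 0 < p -> 0 < s -> coprime p s ->
  eq1_solvable p (p + s) <-> ~ eq1_solvable (p + s) (p + s + s).
Proof.
move=> p_gt0 s_gt0 co_ps; have co_qs := coprimeDl co_ps.
have s_lt_q : 0 < s < p + s by rewrite s_gt0 -{1}[s]add0n ltn_add2r.
case odd_q: (odd (p + s)).
  rewrite eq1_solvableC -{2}[p](addnK s) eq1_solvableBlN //.
  by rewrite eq1_solvableDl.
have [odd_p odd_s] : odd p /\ odd s.
  move: odd_q; rewrite oddD; case/orP: (coprime_odd co_ps) => [-> | ->].
    by case: (odd s).
  by case: (odd p).
have odd_r : odd (p + s + s) by rewrite !oddD odd_p odd_s.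
have s_lt_r : 0 < s < p + s + s by rewrite s_gt0 -{1}[s]add0n ltn_add2r addn_gt0 p_gt0.
have co_rs := coprimeDl co_qs.
have -> : eq1_solvable p (p + s) <-> eq1_solvable (p + s + s) s.
  rewrite eq1_solvableDl // eq1_solvableC -(eq1_solvableDl odd_s p_gt0) [s + p]addnC.
  by rewrite -(eq1_solvableDl odd_s (ltn_addr s p_gt0)) eq1_solvableC [s + _]addnC.
rewrite [eq1_solvable (p + s) _]eq1_solvableC -{3}[p + s](addnK s) eq1_solvableBlN //.
by have := classic (eq1_solvable (p + s + s) s); tauto.
Qed.

Lemma Gamma_scale g a b : 0 < g -> Gamma (g * a) (g * b) = Gamma a b.
Proof. by move=> g_gt0; rewrite /Gamma -muln_gcdr !divnMl. Qed.

Lemma Gamma_1or2 a b : Gamma a b = 1 \/ Gamma a b = 2.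
Proof. by rewrite /Gamma; case: excluded_middle_informative; [left | right]. Qed.

Lemma Gamma_step p s : 0 < p -> 0 < s -> coprime p s ->
  Gamma (p + s) (p + s + s) = 3 - Gamma p (p + s).
Proof.
move=> p_gt0 s_gt0 co_ps; have := eq1_solvable_step p_gt0 s_gt0 co_ps.
have co_pq : coprime p (p + s) by rewrite /coprime gcdnDl.
have co_qr : coprime (p + s) (p + s + s) by rewrite /coprime gcdnDl; apply: coprimeDl.
rewrite /Gamma (eqP co_pq) (eqP co_qr) !divn1.
by do 2 case: excluded_middle_informative => /= ?; tauto.
Qed.

Lemma arith_scale g a r n : arith (g * a) (g * r) n = g * arith a r n.
Proof. by rewrite /arith mulnDr mulnCA. Qed.

Lemma arithS a r n : 0 < n -> arith a r n.+1 = arith a r n + r.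
Proof. by case: n => // n _; rewrite /arith !subSS !subn0 mulSnr addnA. Qed.

Lemma coprime_arith a r n : coprime a r -> coprime (arith a r n) r.
Proof. by move=> co_ar; rewrite /coprime /arith gcdnC addnC gcdnMDl gcdnC. Qed.

Lemma Gamma_arithS a r n : 0 < a -> 0 < r -> coprime a r -> 0 < n ->
  Gamma (arith a r n.+1) (arith a r n.+2) = 3 - Gamma (arith a r n) (arith a r n.+1).
Proof.
move=> a_gt0 r_gt0 co_ar n_gt0; rewrite !arithS //.
apply: Gamma_step => //; last exact: coprime_arith.
by rewrite /arith addn_gt0 a_gt0.
Qed.

Lemma coprime_cofactors a r : 0 < a ->
  exists g p s, [/\ 0 < g, a = g * p, r = g * s & coprime p s].
Proof.
move=> a_gt0; set g := gcdn a r; have g_gt0 : 0 < g by rewrite gcdn_gt0 a_gt0.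
have [p def_a] := dvdnP (dvdn_gcdl a r); have [s def_r] := dvdnP (dvdn_gcdr a r).
exists g, p, s; rewrite [g * p]mulnC [g * s]mulnC; split => //.
by rewrite /coprime -(eqn_pmul2r g_gt0) muln_gcdl -def_a -def_r mul1n.
Qed.

Lemma alternating_seq (f : nat -> nat) c :
  (forall n, 0 < n -> f n.+1 = c - f n) -> f 1 <= c ->
  forall n, 0 < n -> f n = if odd n then f 1 else c - f 1.
Proof.
move=> f_step f1_le; elim=> [// | [// | n] IH _].
by rewrite f_step // IH //=; case: (odd n); rewrite ?subKn.
Qed.

Theorem theorem1p6 (a r : nat) (ha : 0 < a) (hr : 0 < r) :
  (forall n, 1 <= n ->
     Gamma (arith a r n) (arith a r n.+1) = (if odd n then 1 else 2)) \/
  (forall n, 1 <= n ->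
     Gamma (arith a r n) (arith a r n.+1) = (if odd n then 2 else 1)).
Proof.
have [g [p [s [g_gt0 def_a def_r co_ps]]]] := coprime_cofactors r ha.
have p_gt0 : 0 < p by move: ha; rewrite def_a muln_gt0 => /andP[].
have s_gt0 : 0 < s by move: hr; rewrite def_r muln_gt0 => /andP[].
pose f n := Gamma (arith p s n) (arith p s n.+1).
have Gamma_f n : Gamma (arith a r n) (arith a r n.+1) = f n.
  by rewrite def_a def_r !arith_scale Gamma_scale.
have f_step n : 0 < n -> f n.+1 = 3 - f n by exact: Gamma_arithS.
have f1_le3 : f 1 <= 3 by rewrite /f; case: (Gamma_1or2 (arith p s 1) (arith p s 2)) => ->.
have f_alt := alternating_seq f_step f1_le3.
case: (Gamma_1or2 (arith p s 1) (arith p s 2)) => f1; [left | right] => n n_gt0;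
  by rewrite Gamma_f f_alt // /f f1; case: (odd n).
Qed.
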